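(* $\mathrm{EquSLP}\leq_{\mathrm{P}}\mathrm{3SoSSLP}$ (polynomial-time many-one reduction).
   Context: A (division-free, constant-free) SLP computing an integer is a sequence $(b_0,\dots,b_m)$ of integers with $b_0=1$ and $b_i=b_j\circ_i b_k$ for some $j,k<i$, $\circ_i\in\{+,-,\times\}$; it computes $b_m$. $\mathrm{EquSLP}$: given an SLP computing $N\in\mathbb{Z}$, decide whether $N=0$. $\mathrm{3SoSSLP}$: given an SLP computing $N\in\mathbb{Z}$, decide whether $N=a^2+b^2+c^2$ for some integers $a,b,c$. *)

From HB Require Import structures.
From mathcomp Require Import all_boot all_order all_algebra.
Set Implicit Arguments. Unset Strict Implicit. Unset Printing Implicit Defensive.
Import Order.TTheory GRing.Theory Num.Theory.
Local Open Scope ring_scope.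

(* An SLP (b_0,...,b_m) is given by the list of its m instructions;    *)
(* instruction number i (1-based) computes b_i = b_j op b_k, j,k < i.  *)
Inductive slp_op := OpAdd | OpSub | OpMul.
Record slp_instr := SlpInstr { iop : slp_op; iarg1 : nat; iarg2 : nat }.
Definition SLP := seq slp_instr.

(* well-formedness: the instruction at 0-based position p computes b_(p+1),
   so its arguments must be indices <= p *)
Definition slp_wf (P : SLP) : Prop :=
  forall p, (p < size P)%N ->
    let ins := nth (SlpInstr OpAdd 0 0) P p in
    (iarg1 ins <= p)%N /\ (iarg2 ins <= p)%N.

Definition apply_op (o : slp_op) (x y : int) : int :=
  match o with OpAdd => x + y | OpSub => x - y | OpMul => x * y end.

Definition slp_values (P : SLP) : seq int :=
  foldl (fun vals ins =>
           rcons vals (apply_op (iop ins) (nth 0 vals (iarg1 ins))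
                                          (nth 0 vals (iarg2 ins))))
        [:: 1] P.

Definition slp_value (P : SLP) : int := last 1 (slp_values P).

Definition EquSLP (P : SLP) : Prop := slp_value P = 0.
Definition ThreeSoSSLP (P : SLP) : Prop :=
  exists a b c : int, slp_value P = a ^+ 2 + b ^+ 2 + c ^+ 2.

Fixpoint bits_aux (fuel n : nat) : seq bool :=
  match fuel with
  | 0 => [::]
  | f.+1 => if n is 0 then [::] else odd n :: bits_aux f n./2
  end.
(* binary digits, least significant first; 0 has no digits *)
Definition bits (n : nat) : seq bool := bits_aux n n.
(* self-delimiting: each bit b written as "1 b", terminated by "0" *)
Definition enc_nat (n : nat) : seq bool :=
  flatten [seq [:: true; b] | b <- bits n] ++ [:: false].
Definition enc_op (o : slp_op) : seq bool :=
  match o with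
  | OpAdd => [:: false; false] | OpSub => [:: false; true]
  | OpMul => [:: true; false] end.
Definition enc_instr (ins : slp_instr) : seq bool :=
  enc_op (iop ins) ++ enc_nat (iarg1 ins) ++ enc_nat (iarg2 ins).
Definition enc_slp (P : SLP) : seq bool := flatten (map enc_instr P).

Inductive move := MoveL | MoveR | MoveS.

Record TM := {
  tm_state : finType;
  tm_sym : finType;
  tm_blank : tm_sym;
  tm_inj : bool -> tm_sym;
  tm_start : tm_state;
  tm_halt : tm_state;
  tm_delta : tm_state -> tm_sym -> tm_state * tm_sym * move
}.

(* configuration: state, left part of tape (nearest cell first),
   scanned symbol, right part; all other cells are blank *)
Record config (M : TM) := Config {
  c_state : tm_state M;
  c_left : seq (tm_sym M);
  c_head : tm_sym M;
  c_right : seq (tm_sym M)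
}.

Definition tm_step (M : TM) (c : config M) : config M :=
  let: Config q l h r := c in
  if q == tm_halt M then c else
  let: (q', s, mv) := tm_delta q h in
  match mv with
  | MoveS => Config q' l s r
  | MoveL => Config q' (behead l) (head (tm_blank M) l) (s :: r)
  | MoveR => Config q' (s :: l) (head (tm_blank M) r) (behead r)
  end.

Definition tm_init (M : TM) (x : seq bool) : config M :=
  Config (tm_start M) [::] (head (tm_blank M) (map (tm_inj M) x))
         (behead (map (tm_inj M) x)).

Definition sym_to_bool (M : TM) (s : tm_sym M) : option bool :=
  [pick b : bool | tm_inj M b == s].

Fixpoint read_bits (M : TM) (s : seq (tm_sym M)) : seq bool :=
  match s with
  | [::] => [::]
  | a :: s' => if sym_to_bool a is Some b then b :: read_bits s' else [::]
  end.

Definition tm_output (M : TM) (c : config M) : seq bool :=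
  read_bits (c_head c :: c_right c).

(* M computes f within time p(|x|) for some polynomial p *)
Definition poly_time_computable (f : seq bool -> seq bool) : Prop :=
  exists (M : TM) (k : nat), forall x : seq bool,
    let c := iter (k * (size x).+1 ^ k)%N (@tm_step M) (tm_init M x) in
    c_state c = tm_halt M /\ tm_output c = f x.

Definition slp_poly_reducible (A B : SLP -> Prop) : Prop :=
  exists f : seq bool -> seq bool,
    poly_time_computable f /\
    forall P : SLP, slp_wf P ->
      exists Q : SLP, slp_wf Q /\ f (enc_slp P) = enc_slp Q /\ (A P <-> B Q).

From HB Require Import structures.
From mathcomp Require Import all_boot all_order all_algebra zify.
Unset Printing Implicit Defensive.
Import Order.TTheory GRing.Theory Num.Theory.

(* If P computes N with m instructions, appending b_(m+1) = b_0 - b_0,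
   b_(m+2) = b_m * b_m and b_(m+3) = b_(m+1) - b_(m+2) yields an SLP computing
   -N^2, which is a sum of three squares iff N = 0.  The encoding of the three
   new instructions is fixed except for the binary expansions of m, m, m + 1 and
   m + 2, and m is the number of places where a six-state automaton reading the
   encoding of P sees the 0 closing a second argument.  A single-tape machine
   thus appends four binary counters initialised to 0, 0, 1 and 2, and for each
   of them rescans the input, walking to the counter and incrementing it at
   every instruction end: O(|x|) passes of O(|x|) steps each. *)

(** * Negated squares *)

Section NegSquare.
Local Open Scope ring_scope.

Definition neg_square_suffix (m : nat) : SLP :=
  [:: SlpInstr OpSub 0 0; SlpInstr OpMul m m; SlpInstr OpSub m.+1 m.+2].

Definition neg_square_slp (P : SLP) : SLP := P ++ neg_square_suffix (size P).

Lemma slp_wf_neg_square P : slp_wf P -> slp_wf (neg_square_slp P).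
Proof.
move=> wfP p; rewrite size_cat /= nth_cat => lt_p.
case: ltnP => [/wfP // | le_P_p].
have : (p - size P < 3)%N by lia.
by case: (p - size P)%N (subnKC le_P_p) => [|[|[|k]]] //= <-; lia.
Qed.

Definition slp_step (vals : seq int) (ins : slp_instr) : seq int :=
  rcons vals (apply_op (iop ins) (nth 0 vals (iarg1 ins)) (nth 0 vals (iarg2 ins))).

Lemma size_foldl_slp_step vals P :
  size (foldl slp_step vals P) = (size vals + size P)%N.
Proof. by elim: P vals => [|ins P IH] vals /=; rewrite ?addn0 // IH size_rcons addnS. Qed.

Lemma nth_foldl_slp_step vals P i : (i < size vals)%N ->
  nth 0 (foldl slp_step vals P) i = nth 0 vals i.
Proof.
elim: P vals => [|ins P IH] vals //= lt_i.
by rewrite IH ?size_rcons 1?ltnW // nth_rcons lt_i.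
Qed.

Lemma slp_value_neg_square P : slp_value (neg_square_slp P) = - slp_value P ^+ 2.
Proof.
rewrite /slp_value /slp_values -/slp_step foldl_cat.
set V := foldl slp_step [:: 1] P.
have size_V : size V = (size P).+1 by rewrite size_foldl_slp_step.
have V0 : nth 0 V 0 = 1 by rewrite nth_foldl_slp_step.
have lastV : last 1 V = nth 0 V (size P).
  by rewrite -(nth_last 1) size_V; apply: set_nth_default; rewrite size_V.
rewrite lastV /= /slp_step /= last_rcons !nth_rcons !size_rcons size_V.
by rewrite !ltnSn !ltnn !eqxx /= V0 subrr sub0r expr2.
Qed.

Lemma sum3sq_oppsqr_eq0 (n a b c : int) :
  - n ^+ 2 = a ^+ 2 + b ^+ 2 + c ^+ 2 -> n = 0.
Proof.
move=> sos; apply/eqP; rewrite -sqrf_eq0 eq_le sqr_ge0 andbT -oppr_ge0 sos.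
by rewrite !addr_ge0 ?sqr_ge0.
Qed.

Lemma EquSLP_neg_square P : EquSLP P <-> ThreeSoSSLP (neg_square_slp P).
Proof.
rewrite /EquSLP /ThreeSoSSLP slp_value_neg_square; split.
- by move=> ->; exists 0, 0, 0; rewrite expr0n oppr0 !addr0.
- by case=> a [b [c /sum3sq_oppsqr_eq0]].
Qed.

End NegSquare.

(** * Binary numerals and instruction counting *)

Lemma enc_slp_cat P Q : enc_slp (P ++ Q) = enc_slp P ++ enc_slp Q.
Proof. by rewrite /enc_slp map_cat flatten_cat. Qed.

Lemma enc_neg_square_suffix m :
  enc_slp (neg_square_suffix m) = [:: false; true; false; false; true; false] ++
    enc_nat m ++ enc_nat m ++ [:: false; true] ++ enc_nat m.+1 ++ enc_nat m.+2.
Proof. by rewrite /enc_slp /= /enc_instr /= -!catA cats0. Qed.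

Lemma bits_aux_enough f1 f2 n : n <= f1 -> n <= f2 -> bits_aux f1 n = bits_aux f2 n.
Proof.
elim: f1 f2 n => [|f IH] [|g] [|n] //= le_f1 le_f2.
by congr (_ :: _); apply: IH; lia.
Qed.

Lemma bitsE n : bits n = if n is 0 then [::] else odd n :: bits n./2.
Proof.
by case: n => [|n] //; rewrite /bits /=; congr (_ :: _); apply: bits_aux_enough; lia.
Qed.

Lemma size_bits n : size (bits n) <= n.
Proof.
have size_aux f m : size (bits_aux f m) <= f by elim: f m => [|f IH] [|m] //=; rewrite ltnS.
exact: size_aux.
Qed.

Fixpoint incr_bits (s : seq bool) : seq bool :=
  match s with
  | [::] => [:: true]
  | false :: s' => true :: s'
  | true :: s' => false :: incr_bits s'
  end.

Lemma size_incr_bits s : size (incr_bits s) <= (size s).+1.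
Proof. by elim: s => [|[] s IH] //=. Qed.

Lemma size_incr_bits_ge s : size s <= size (incr_bits s).
Proof. by elim: s => [|[] s IH] //=. Qed.

Lemma bitsS n : bits n.+1 = incr_bits (bits n).
Proof.
elim/ltn_ind: n => -[|n] IH //.
rewrite [bits n.+2]bitsE [bits n.+1]bitsE -[n.+2./2]/(uphalf n.+1) uphalf_half.
rewrite -[odd n.+2]/(~~ odd n.+1); case: (odd n.+1) => //=.
by rewrite add1n IH //; lia.
Qed.

Lemma size_bits_homo : {homo (fun n => size (bits n)) : m n / m <= n}.
Proof. by apply: homo_leq leqnn leq_trans _ => n; rewrite bitsS size_incr_bits_ge. Qed.

Definition enc_digits (s : seq bool) : seq bool :=
  flatten [seq [:: true; b] | b <- s] ++ [:: false].

Lemma enc_digits_cons b s : enc_digits (b :: s) = [:: true, b & enc_digits s].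
Proof. by []. Qed.

Lemma size_enc_digits s : size (enc_digits s) = (size s).*2.+1.
Proof. by elim: s => [|b s IH] //=; rewrite IH doubleS. Qed.

Lemma enc_natE n : enc_nat n = enc_digits (bits n). Proof. by []. Qed.

Inductive parse_state := OpBit1 | OpBit2 | Arg1 | Arg1Digit | Arg2 | Arg2Digit.

Definition parse_state_to_ord (d : parse_state) : 'I_6 :=
  inord match d with
  | OpBit1 => 0 | OpBit2 => 1 | Arg1 => 2 | Arg1Digit => 3 | Arg2 => 4 | Arg2Digit => 5 end.
Definition ord_to_parse_state (i : 'I_6) : parse_state :=
  match val i with
  | 0 => OpBit1 | 1 => OpBit2 | 2 => Arg1 | 3 => Arg1Digit | 4 => Arg2 | _ => Arg2Digit end.
Lemma parse_state_to_ordK : cancel parse_state_to_ord ord_to_parse_state.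
Proof. by case; rewrite /ord_to_parse_state /= inordK. Qed.
HB.instance Definition _ := Countable.copy parse_state (can_type parse_state_to_ordK).
HB.instance Definition _ := Finite.copy parse_state (can_type parse_state_to_ordK).

Definition parse_step (d : parse_state) (b : bool) : parse_state :=
  match d with
  | OpBit1 => OpBit2 | OpBit2 => Arg1
  | Arg1 => if b then Arg1Digit else Arg2 | Arg1Digit => Arg1
  | Arg2 => if b then Arg2Digit else OpBit1 | Arg2Digit => Arg2
  end.

Definition ends_instr (d : parse_state) (b : bool) : bool :=
  if d is Arg2 then ~~ b else false.

Fixpoint count_instrs (d : parse_state) (xs : seq bool) : nat :=
  if xs is b :: xs' then ends_instr d b + count_instrs (parse_step d b) xs' else 0.

Lemma count_instrs_cat d xs ys :
  count_instrs d (xs ++ ys) = count_instrs d xs + count_instrs (foldl parse_step d xs) ys.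
Proof. by elim: xs d => [|b xs IH] d //=; rewrite IH addnA. Qed.

Lemma count_instrs_le d xs : count_instrs d xs <= size xs.
Proof. by elim: xs d => [|b xs IH] d //=; have := IH (parse_step d b); case: ends_instr; lia. Qed.

Lemma parse_enc_digits s :
  [/\ foldl parse_step Arg1 (enc_digits s) = Arg2, count_instrs Arg1 (enc_digits s) = 0,
      foldl parse_step Arg2 (enc_digits s) = OpBit1 & count_instrs Arg2 (enc_digits s) = 1].
Proof. by elim: s => [|b s [IH1 IH2 IH3 IH4]] //; case: b; split. Qed.

Lemma parse_enc_slp P :
  foldl parse_step OpBit1 (enc_slp P) = OpBit1 /\ count_instrs OpBit1 (enc_slp P) = size P.
Proof.
elim: P => [|[o a1 a2] P [IHfin IHcount]] //.
have [fin0 count0] : foldl parse_step OpBit1 (enc_op o) = Arg1 /\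
                     count_instrs OpBit1 (enc_op o) = 0 by case: o.
have [fin1 count1 _ _] := parse_enc_digits (bits a1).
have [_ _ fin2 count2] := parse_enc_digits (bits a2).
rewrite -[enc_slp _]/((enc_op o ++ enc_digits (bits a1) ++ enc_digits (bits a2)) ++ enc_slp P).
move: (enc_digits (bits a1)) (enc_digits (bits a2)) fin1 count1 fin2 count2.
move=> D1 D2 fin1 count1 fin2 count2.
by rewrite -!catA !(foldl_cat, count_instrs_cat) fin0 fin1 fin2 count0 count1 count2 IHfin IHcount.
Qed.

(** * Runs of Turing machines *)

Module TMRuns.
Section Runs.
Context {M : TM}.
Local Notation blank := (tm_blank M).
Local Notation halt := (tm_halt M).

Definition cfg (q : tm_state M) (L T : seq (tm_sym M)) : config M :=
  Config q L (head blank T) (behead T).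

Definition reaches (c c' : config M) (t : nat) : Prop :=
  exists2 n, n <= t & iter n (@tm_step M) c = c'.

Arguments cfg : simpl never.
Arguments reaches : simpl never.

Lemma reaches_refl {c} : reaches c c 0.
Proof. by exists 0. Qed.
#[local] Hint Resolve reaches_refl : core.

Lemma reaches_trans {c1 c2 c3 t1 t2} :
  reaches c1 c2 t1 -> reaches c2 c3 t2 -> reaches c1 c3 (t1 + t2).
Proof.
by move=> [n1 le1 <-] [n2 le2 <-]; exists (n2 + n1); rewrite ?iterD // addnC leq_add.
Qed.

Lemma reaches_le {c c' t t'} : reaches c c' t -> t <= t' -> reaches c c' t'.
Proof. by move=> [n le_n <-] le_t; exists n => //; apply: leq_trans le_t. Qed.

Lemma reaches_step {c c' t} : reaches (tm_step c) c' t -> reaches c c' t.+1.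
Proof. by move=> [n le_n <-]; exists n.+1; rewrite // iterSr. Qed.

Lemma iter_halt n L T : iter n (@tm_step M) (cfg halt L T) = cfg halt L T.
Proof. by elim: n => //= n ->; rewrite /tm_step /= eqxx. Qed.

Lemma tm_step_cfg {q L T} : q <> halt ->
  tm_step (cfg q L T) =
    let: (q', s, mv) := tm_delta q (head blank T) in
    match mv with
    | MoveS => cfg q' L (s :: behead T)
    | MoveL => cfg q' (behead L) (head blank L :: s :: behead T)
    | MoveR => cfg q' (s :: L) (behead T)
    end.
Proof. by rewrite /tm_step /= => /eqP/negbTE ->; case: tm_delta => [[q' s] []]. Qed.

Lemma step_right {q q' a s L T} : q <> halt -> tm_delta q a = (q', s, MoveR) ->
  reaches (cfg q L (a :: T)) (cfg q' (s :: L) T) 1.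
Proof. by move=> q_run delta_a; apply: reaches_step; rewrite tm_step_cfg //= delta_a. Qed.

Lemma sweep_right {q} {P : pred (tm_sym M)} {g s L T} :
  q <> halt -> (forall a, P a -> tm_delta q a = (q, g a, MoveR)) -> all P s ->
  reaches (cfg q L (s ++ T)) (cfg q (rev (map g s) ++ L) T) (size s).
Proof.
move=> q_run delta_P; elim: s L => [|a s IH] L //=.
case/andP=> Pa Ps; rewrite rev_cons cat_rcons -add1n.
exact: reaches_trans (step_right q_run (delta_P a Pa)) (IH _ Ps).
Qed.

Lemma sweep_left {q} {P : pred (tm_sym M)} {s L h T} :
  q <> halt -> (forall a, P a -> tm_delta q a = (q, a, MoveL)) -> all P (h :: s) ->
  reaches (cfg q (rev s ++ L) (h :: T)) (cfg q (behead L) (head blank L :: s ++ h :: T))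
          (size s).+1.
Proof.
move=> q_run delta_P; elim/last_ind: s h T => [|s a IH] h T /=.
  by case/andP=> Ph _; apply: reaches_step; rewrite tm_step_cfg //= delta_P.
rewrite all_rcons => /and3P[Ph Pa Ps].
rewrite rev_rcons size_rcons cat_rcons -add1n.
apply: reaches_trans _ (IH _ _ _); last by rewrite /= Pa.
by apply: reaches_step; rewrite tm_step_cfg //= delta_P.
Qed.

Lemma sweep_left_bounce {q q'} {P : pred (tm_sym M)} {a' s L h T} :
  q <> halt -> (forall a, P a -> tm_delta q a = (q, a, MoveL)) ->
  tm_delta q (head blank L) = (q', a', MoveR) -> all P (h :: s) ->
  reaches (cfg q (rev s ++ L) (h :: T)) (cfg q' (a' :: behead L) (s ++ h :: T)) (size s).+2.
Proof.
move=> q_run delta_P delta_end Ps; rewrite -addn1.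
exact: reaches_trans (sweep_left q_run delta_P Ps) (step_right q_run delta_end).
Qed.
End Runs.
End TMRuns.
Import TMRuns.

#[local] Hint Resolve reaches_refl : core.

(** * The reduction machine *)

Inductive phase := Ph0 | Ph1 | Ph2 | Ph3.

Definition phase_to_ord (p : phase) : 'I_4 :=
  inord match p with Ph0 => 0 | Ph1 => 1 | Ph2 => 2 | Ph3 => 3 end.
Definition ord_to_phase (i : 'I_4) : phase :=
  match val i with 0 => Ph0 | 1 => Ph1 | 2 => Ph2 | _ => Ph3 end.
Lemma phase_to_ordK : cancel phase_to_ord ord_to_phase.
Proof. by case; rewrite /ord_to_phase /= inordK. Qed.
HB.instance Definition _ := Countable.copy phase (can_type phase_to_ordK).
HB.instance Definition _ := Finite.copy phase (can_type phase_to_ordK).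

Inductive sym := Blank | Bit of bool | Mark of bool | Resume | End.

Definition sym_to_ord (a : sym) : 'I_7 :=
  inord match a with
  | Blank => 0 | Bit b => b.+1 | Mark b => b.+3 | Resume => 5 | End => 6 end.
Definition ord_to_sym (i : 'I_7) : sym :=
  match val i with
  | 0 => Blank | 1 => Bit false | 2 => Bit true | 3 => Mark false | 4 => Mark true
  | 5 => Resume | _ => End end.
Lemma sym_to_ordK : cancel sym_to_ord ord_to_sym.
Proof. by case=> [|[]|[]||]; rewrite /ord_to_sym /= inordK. Qed.
HB.instance Definition _ := Countable.copy sym (can_type sym_to_ordK).
HB.instance Definition _ := Finite.copy sym (can_type sym_to_ordK).

Inductive state :=
  | SeekEnd of phase | Write of phase & 'I_8 | Rewind of phase | Scan of phase & parse_state
  | ToEnd of phase | FindMark of phase | Incr of phase | Carry of phase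
  | Grow1 of phase | Grow2 of phase | Grow3 of phase | Return of phase
  | Unmark | Home | Halt.

Definition state_code (q : state) : 'I_15 * phase * parse_state * 'I_8 :=
  let code k p d i := (inord k, p, d, i) in
  match q with
  | SeekEnd p => code 0 p OpBit1 ord0 | Write p i => code 1 p OpBit1 i
  | Rewind p => code 2 p OpBit1 ord0 | Scan p d => code 3 p d ord0
  | ToEnd p => code 4 p OpBit1 ord0 | FindMark p => code 5 p OpBit1 ord0
  | Incr p => code 6 p OpBit1 ord0 | Carry p => code 7 p OpBit1 ord0
  | Grow1 p => code 8 p OpBit1 ord0 | Grow2 p => code 9 p OpBit1 ord0
  | Grow3 p => code 10 p OpBit1 ord0 | Return p => code 11 p OpBit1 ord0
  | Unmark => code 12 Ph0 OpBit1 ord0 | Home => code 13 Ph0 OpBit1 ord0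
  | Halt => code 14 Ph0 OpBit1 ord0
  end.
Definition code_state (c : 'I_15 * phase * parse_state * 'I_8) : state :=
  let: (k, p, d, i) := c in
  match val k with
  | 0 => SeekEnd p | 1 => Write p i | 2 => Rewind p | 3 => Scan p d | 4 => ToEnd p
  | 5 => FindMark p | 6 => Incr p | 7 => Carry p | 8 => Grow1 p | 9 => Grow2 p
  | 10 => Grow3 p | 11 => Return p | 12 => Unmark | 13 => Home | _ => Halt
  end.
Lemma state_codeK : cancel state_code code_state.
Proof. by case=> *; rewrite /code_state /= inordK. Qed.
HB.instance Definition _ := Countable.copy state (can_type state_codeK).
HB.instance Definition _ := Finite.copy state (can_type state_codeK).

Definition cell (marked b : bool) : sym := if marked then Mark b else Bit b.

Definition marked_cells (marked : bool) (l : seq bool) : seq sym :=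
  if l is b :: l' then cell marked b :: map Bit l' else [::].

Definition counter (c : nat) : seq sym := marked_cells true (enc_digits (bits c)).
Arguments counter : simpl never.

Definition phase_prefix (p : phase) : seq sym :=
  match p with
  | Ph0 => [:: Mark false; Bit true; Bit false; Bit false; Bit true; Bit false]
  | Ph2 => [:: Bit false; Bit true]
  | _ => [::]
  end.
Definition phase_start (p : phase) : nat :=
  match p with Ph2 => 1 | Ph3 => 2 | _ => 0 end.
Definition phase_word (p : phase) : seq sym :=
  match p with
  | Ph0 => [:: Mark false; Bit true; Bit false; Bit false; Bit true; Bit false; Mark false]
  | Ph1 => [:: Mark false]
  | Ph2 => [:: Bit false; Bit true; Mark true; Bit true; Bit false]
  | Ph3 => [:: Mark true; Bit false; Bit true; Bit true; Bit false]
  end.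

Lemma phase_wordE p : phase_word p = phase_prefix p ++ counter (phase_start p).
Proof. by case: p. Qed.


Definition write_action (p : phase) (i : nat) : state * sym * move :=
  if i < size (phase_word p) then (Write p (inord i.+1), nth Blank (phase_word p) i, MoveR)
  else (Rewind p, End, MoveS).

Definition next_phase (p : phase) (b : bool) : state * sym * move :=
  match p with
  | Ph0 => (SeekEnd Ph1, Mark b, MoveR)
  | Ph1 => (SeekEnd Ph2, Mark b, MoveR)
  | Ph2 => (SeekEnd Ph3, Mark b, MoveR)
  | Ph3 => (Unmark, Bit b, MoveR)
  end.

(* During phase p the tape holds x, a [Mark false], the cells written by the
   earlier phases, the counter of phase p and [End]; a counter is [enc_nat c]
   with its first cell marked, so the current one is the first [Mark] left of
   [End].  A phase appends [phase_word p], i.e. [phase_prefix p] and a counter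
   set to [phase_start p], then rescans x, and at each instruction end marks
   the scanned 0 as [Resume], increments the counter and comes back.  The
   [Mark false] opening [phase_word Ph0] is also the first bit of the output
   suffix. *)
Definition delta (q : state) (a : sym) : state * sym * move :=
  match q, a with
  | SeekEnd p, (Blank | End) => write_action p 0
  | SeekEnd p, _ => (q, a, MoveR)
  | Write p i, _ => write_action p i
  | Rewind p, Blank => (Scan p OpBit1, Blank, MoveR)
  | Rewind p, _ => (q, a, MoveL)
  | Scan p d, Bit b =>
      if ends_instr d b then (ToEnd p, Resume, MoveR) else (Scan p (parse_step d b), a, MoveR)
  | Scan p d, Mark b => next_phase p b
  | ToEnd p, End => (FindMark p, End, MoveS)
  | ToEnd p, (Bit _ | Mark _) => (q, a, MoveR)
  | FindMark p, Mark _ => (Incr p, a, MoveS)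
  | FindMark p, _ => (q, a, MoveL)
  | Incr p, (Bit true | Mark true) => (Carry p, a, MoveR)
  | Incr p, Bit false => (Grow1 p, Bit true, MoveR)
  | Incr p, Mark false => (Grow1 p, Mark true, MoveR)
  | Carry p, Bit true => (Incr p, Bit false, MoveR)
  | Carry p, Bit false => (Return p, Bit true, MoveL)
  | Grow1 p, _ => (Grow2 p, Bit true, MoveR)
  | Grow2 p, _ => (Grow3 p, Bit false, MoveR)
  | Grow3 p, _ => (Return p, End, MoveL)
  | Return p, Resume => (Scan p OpBit1, Bit false, MoveR)
  | Return p, _ => (q, a, MoveL)
  | Unmark, Mark b => (q, Bit b, MoveR)
  | Unmark, End => (Home, End, MoveS)
  | Unmark, _ => (q, a, MoveR)
  | Home, Blank => (Halt, Blank, MoveR)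
  | Home, _ => (q, a, MoveL)
  | _, _ => (Halt, a, MoveS) (* unreachable *)
  end.

Definition reduction_tm : TM := {|
  tm_state := state; tm_sym := sym; tm_blank := Blank; tm_inj := Bit;
  tm_start := SeekEnd Ph0; tm_halt := Halt; tm_delta := delta |}.

(* The state type of [reduction_tm] cannot be inferred from a state. *)
Local Notation cfg := (@TMRuns.cfg reduction_tm).
Local Notation reaches := (@TMRuns.reaches reduction_tm).
Ltac step := apply: reaches_step; rewrite tm_step_cfg //= ?/write_action ?inordK //=.

Definition bit_cell (a : sym) : bool :=
  match a with Bit _ | Mark _ => true | _ => false end.
Definition not_blank (a : sym) : bool := if a is Blank then false else true.
Definition not_mark (a : sym) : bool := if a is Mark _ then false else true.
Definition unmark (a : sym) : sym := if a is Mark b then Bit b else a.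

Lemma all_bit_cell_map s : all bit_cell (map Bit s). Proof. by elim: s. Qed.
Lemma all_bit_cell_marked f s : all bit_cell (marked_cells f s).
Proof. by case: s => //= b s; rewrite all_bit_cell_map; case: f. Qed.
Lemma size_marked_cells f s : size (marked_cells f s) = size s.
Proof. by case: s => //= b s; rewrite size_map. Qed.
Lemma marked_cells_false s : marked_cells false s = map Bit s.
Proof. by case: s. Qed.

Lemma size_counter c : size (counter c) = (size (bits c)).*2.+1.
Proof. by rewrite size_marked_cells size_enc_digits. Qed.
Lemma size_counter_homo : {homo (fun c => size (counter c)) : m n / m <= n}.
Proof. by move=> m n le_mn; rewrite !size_counter ltnS leq_double size_bits_homo. Qed.
Lemma counter_head c : exists b cs, counter c = Mark b :: map Bit cs.
Proof.
rewrite /counter; case: (bits c) => [|d s]; first by exists false, [::].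
by exists true, (d :: enc_digits s).
Qed.
Lemma map_unmark_counter c : map unmark (counter c) = map Bit (enc_nat c).
Proof. by rewrite /counter enc_natE; case: (enc_digits _) => //= b s; rewrite -map_comp. Qed.

Lemma rev_cat_cons (T : Type) (s1 s2 L : seq T) a :
  rev (s1 ++ a :: s2) ++ L = rev s2 ++ a :: rev s1 ++ L.
Proof. by rewrite rev_cat rev_cons cat_rcons -catA. Qed.

Lemma write_phase_word p L a : a = Blank \/ a = End ->
  reaches (cfg (SeekEnd p) L [:: a]) (cfg (Rewind p) (rev (phase_word p) ++ L) [:: End])
          (size (phase_word p)).+1.
Proof. by case=> ->; case: p; do ?step. Qed.

Lemma seek_end p s L T : all bit_cell s ->
  reaches (cfg (SeekEnd p) L (s ++ T)) (cfg (SeekEnd p) (rev s ++ L) T) (size s).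
Proof.
move=> bits_s; rewrite -[in rev s](map_id s).
by apply: (sweep_right (M := reduction_tm) (P := bit_cell)) => // -[].
Qed.

Lemma to_end p s L : all bit_cell s ->
  reaches (cfg (ToEnd p) L (s ++ [:: End])) (cfg (FindMark p) (rev s ++ L) [:: End]) (size s).+1.
Proof.
move=> bits_s; rewrite -addn1 -[in rev s](map_id s).
apply: reaches_trans (sweep_right (M := reduction_tm) (g := id) _ _ bits_s) _ => //.
- by case.
- by step.
Qed.

Lemma find_mark p b cs L :
  reaches (cfg (FindMark p) (rev (map Bit cs) ++ Mark b :: L) [:: End])
          (cfg (Incr p) L (Mark b :: map Bit cs ++ [:: End])) (size cs).+2.
Proof.
rewrite -addn1 -(size_map Bit).
apply: reaches_trans (sweep_left (M := reduction_tm) (P := not_mark) _ _ _) _ => //.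
- by case.
- by rewrite /= all_map; apply/allP.
- by step.
Qed.

Lemma return_to_scan p s L h T : all bit_cell (h :: s) ->
  reaches (cfg (Return p) (rev s ++ Resume :: L) (h :: T))
          (cfg (Scan p OpBit1) (Bit false :: L) (s ++ h :: T)) (size s).+2.
Proof. by apply: (sweep_left_bounce (M := reduction_tm)) => // -[]. Qed.

Lemma rewind_to_scan p s L : all bit_cell s -> L = [::] \/ L = [:: Blank] ->
  reaches (cfg (Rewind p) (rev s ++ L) [:: End]) (cfg (Scan p OpBit1) [:: Blank] (s ++ [:: End]))
          (size s).+2.
Proof.
move=> bits_s L_left; have -> : [:: Blank] = Blank :: behead L by case: L_left => ->.
apply: (sweep_left_bounce (M := reduction_tm) (P := not_blank)) => //.
- by case.
- by case: L_left => ->.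
- by rewrite /=; apply: sub_all bits_s => -[].
Qed.

Lemma unmark_to_end s L : all bit_cell s ->
  reaches (cfg Unmark L (s ++ [:: End])) (cfg Home (rev (map unmark s) ++ L) [:: End])
          (size s).+1.
Proof.
move=> bits_s; rewrite -addn1.
apply: reaches_trans (sweep_right (M := reduction_tm) (g := unmark) _ _ bits_s) _ => //.
- by case.
- by step.
Qed.

Lemma home_to_halt s : all bit_cell s ->
  reaches (cfg Home (rev s ++ [:: Blank]) [:: End]) (cfg Halt [:: Blank] (s ++ [:: End]))
          (size s).+2.
Proof.
move=> bits_s; apply: (sweep_left_bounce (M := reduction_tm) (P := not_blank)) => //.
- by case.
- by rewrite /=; apply: sub_all bits_s => -[].
Qed.

Lemma incr_counter p f s L : exists u h v,
  [/\ u ++ h :: v = marked_cells f (enc_digits (incr_bits s)), all bit_cell (h :: u) &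
      reaches (cfg (Incr p) L (marked_cells f (enc_digits s) ++ [:: End]))
              (cfg (Return p) (rev u ++ L) (h :: v ++ [:: End])) ((size s).*2 + 4)].
Proof.
elim: s f L => [|[] s IH] f L.
- exists [:: cell f true; Bit true], (Bit false), [::].
  by split => //; case: f => //; do 4!step.
- have [u [h [v [new_counter bits_u run]]]] := IH false [:: Bit false, cell f true & L].
  exists [:: cell f true, Bit false & u], h, v; split.
  + rewrite -[incr_bits _]/(false :: incr_bits s) enc_digits_cons /= new_counter.
    by rewrite marked_cells_false.
  + by move: bits_u => /= /andP[-> ->]; case: (f).
  + have -> : rev [:: cell f true, Bit false & u] ++ L = rev u ++ [:: Bit false, cell f true & L].
      by rewrite !rev_cons -!cats1 -!catA.
    apply: reaches_le (reaches_trans (t1 := 2) _ run) _; last by rewrite /= -!addnn; lia.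
    by rewrite enc_digits_cons /= marked_cells_false; case: (f); do 2!step.
- exists [::], (cell f true), (Bit true :: map Bit (enc_digits s)); split => //; first by case: f.
  by apply: (reaches_le (t := 2)) => //; case: f; do 2!step.
Qed.

Lemma goto_counter p S c L : all bit_cell S ->
  reaches (cfg (Scan p Arg2) L (Bit false :: S ++ counter c ++ [:: End]))
          (cfg (Incr p) (rev S ++ Resume :: L) (counter c ++ [:: End]))
          (size S + (size (counter c)).*2 + 3).
Proof.
move=> bits_S; have [b [cs ->]] := counter_head c.
have bits_S_cs : all bit_cell (S ++ Mark b :: map Bit cs).
  by rewrite all_cat bits_S /= all_bit_cell_map.
have mark : reaches (cfg (Scan p Arg2) L (Bit false :: S ++ (Mark b :: map Bit cs) ++ [:: End]))
                    (cfg (ToEnd p) (Resume :: L) ((S ++ Mark b :: map Bit cs) ++ [:: End])) 1.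
  by rewrite -catA; step.
have := to_end p _ (Resume :: L) bits_S_cs; rewrite rev_cat_cons => to_counter.
apply: reaches_le (reaches_trans mark (reaches_trans to_counter (find_mark p b cs _))) _.
by rewrite size_cat /= size_map -addnn; lia.
Qed.

Lemma count_instr_end p S c L : all bit_cell S ->
  reaches (cfg (Scan p Arg2) L (Bit false :: S ++ counter c ++ [:: End]))
          (cfg (Scan p OpBit1) (Bit false :: L) (S ++ counter c.+1 ++ [:: End]))
          (4 * size (S ++ counter c) + 9).
Proof.
move=> bits_S.
have [u [h [v [new_counter bits_u incr]]]] := incr_counter p true (bits c) (rev S ++ Resume :: L).
have bits_Su : all bit_cell (h :: S ++ u).
  by move: bits_u; rewrite /= all_cat bits_S => /andP[-> ->].
have ret := return_to_scan p (S ++ u) L h (v ++ [:: End]) bits_Su.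
rewrite rev_cat -catA in ret.
have -> : S ++ counter c.+1 ++ [:: End] = (S ++ u) ++ h :: v ++ [:: End].
  by rewrite /counter bitsS -new_counter -!catA.
apply: reaches_le (reaches_trans (goto_counter p S c L bits_S) (reaches_trans incr ret)) _.
have := size_counter c; have := size_counter c.+1; rewrite /counter bitsS -new_counter.
by rewrite !size_cat /= -!addnn; have := size_incr_bits (bits c); lia.
Qed.

Lemma count_run p Pre xs d c L : all bit_cell Pre ->
  reaches (cfg (Scan p d) L (map Bit xs ++ Pre ++ counter c ++ [:: End]))
          (cfg (Scan p (foldl parse_step d xs)) (rev (map Bit xs) ++ L)
               (Pre ++ counter (c + count_instrs d xs) ++ [:: End]))
          (size xs * (4 * (size xs + size Pre + size (counter (c + count_instrs d xs))) + 9)).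
Proof.
move=> bits_Pre; elim: xs d c L => [|b xs IH] d c L; first by rewrite addn0.
rewrite /= rev_cons cat_rcons.
case ends_b: (ends_instr d b).
- have [-> ->] : d = Arg2 /\ b = false by case: d ends_b => //; case: b.
  rewrite add1n -addSnnS.
  have bits_S : all bit_cell (map Bit xs ++ Pre) by rewrite all_cat all_bit_cell_map bits_Pre.
  have := count_instr_end p _ c L bits_S; rewrite -!catA => mark_count.
  apply: reaches_le (reaches_trans mark_count (IH OpBit1 c.+1 (Bit false :: L))) _.
  have : size (counter c) <= size (counter (c.+1 + count_instrs OpBit1 xs)).
    by apply: size_counter_homo; lia.
  rewrite -[parse_step Arg2 false]/OpBit1 !size_cat size_map; nia.
- rewrite add0n.
  have scan_b : reaches (cfg (Scan p d) L (Bit b :: map Bit xs ++ Pre ++ counter c ++ [:: End]))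
                       (cfg (Scan p (parse_step d b)) (Bit b :: L)
                            (map Bit xs ++ Pre ++ counter c ++ [:: End])) 1.
    by apply: step_right => //=; rewrite ends_b.
  apply: reaches_le (reaches_trans scan_b (IH _ _ _)) _; nia.
Qed.

Definition phase_tape (x : seq bool) (Pre : seq sym) (c : nat) : seq sym :=
  map Bit x ++ Mark false :: Pre ++ counter c ++ [:: End].

Definition phase_time (n k : nat) : nat := n.+1 * (4 * (n + k) + 20).

Lemma size_phase_word p : size (phase_word p) <= 7.
Proof. by case: p. Qed.

Lemma phase_run p p' x Pre c : next_phase p false = (SeekEnd p', Mark false, MoveR) ->
  all bit_cell Pre ->
  reaches (cfg (Scan p OpBit1) [:: Blank] (phase_tape x Pre c))
          (cfg (Scan p' OpBit1) [:: Blank]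
               (phase_tape x ((Pre ++ counter (c + count_instrs OpBit1 x)) ++ phase_prefix p')
                           (phase_start p')))
          (phase_time (size x) (size Pre + size (counter (c + count_instrs OpBit1 x)))).
Proof.
move=> next_p bits_Pre; set c' := c + _; set W := Pre ++ counter c'.
set Lx := rev (map Bit x) ++ [:: Blank].
have bits_W : all bit_cell W by rewrite all_cat bits_Pre all_bit_cell_marked.
have count := count_run p (Mark false :: Pre) x OpBit1 c [:: Blank] bits_Pre.
have boundary : reaches (cfg (Scan p (foldl parse_step OpBit1 x)) Lx
                             (Mark false :: Pre ++ counter c' ++ [:: End]))
                        (cfg (SeekEnd p') (Mark false :: Lx) (W ++ [:: End])) 1.
  by rewrite /W -catA; apply: step_right.
have seek := seek_end p' W (Mark false :: Lx) [:: End] bits_W.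
have write := write_phase_word p' (rev W ++ Mark false :: Lx) End (or_intror erefl).
have bits_x_W : all bit_cell (map Bit x ++ Mark false :: W ++ phase_word p').
  by rewrite all_cat all_bit_cell_map /= all_cat bits_W; case: (p').
have := rewind_to_scan p' _ [:: Blank] bits_x_W (or_intror erefl).
have -> : rev (map Bit x ++ Mark false :: W ++ phase_word p') ++ [:: Blank] =
          rev (phase_word p') ++ rev W ++ Mark false :: Lx by rewrite rev_cat_cons rev_cat -catA.
have -> : (map Bit x ++ Mark false :: W ++ phase_word p') ++ [:: End] =
          phase_tape x (W ++ phase_prefix p') (phase_start p').
  by rewrite /phase_tape phase_wordE -!catA cat_cons -!catA.
move=> rewind.
apply: reaches_le (reaches_trans count (reaches_trans boundary
                  (reaches_trans seek (reaches_trans write rewind)))) _.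
have := size_phase_word p'; rewrite /phase_time /W /c' !size_cat /= !size_cat size_map; nia.
Qed.

Lemma last_phase_run x Pre c : all bit_cell Pre ->
  reaches (cfg (Scan Ph3 OpBit1) [:: Blank] (phase_tape x Pre c))
          (cfg Halt [:: Blank]
               (map Bit x ++ Bit false ::
                map unmark (Pre ++ counter (c + count_instrs OpBit1 x)) ++ [:: End]))
          (phase_time (size x) (size Pre + size (counter (c + count_instrs OpBit1 x)))).
Proof.
move=> bits_Pre; set c' := c + _; set W := Pre ++ counter c'.
set Lx := rev (map Bit x) ++ [:: Blank].
have bits_W : all bit_cell W by rewrite all_cat bits_Pre all_bit_cell_marked.
have count := count_run Ph3 (Mark false :: Pre) x OpBit1 c [:: Blank] bits_Pre.
have boundary : reaches (cfg (Scan Ph3 (foldl parse_step OpBit1 x)) Lx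
                             (Mark false :: Pre ++ counter c' ++ [:: End]))
                        (cfg Unmark (Bit false :: Lx) (W ++ [:: End])) 1.
  by rewrite /W -catA; apply: step_right.
have clean := unmark_to_end W (Bit false :: Lx) bits_W.
have bits_x_W : all bit_cell (map Bit x ++ Bit false :: map unmark W).
  by rewrite all_cat all_bit_cell_map /= all_map; apply: sub_all bits_W => -[].
have := home_to_halt _ bits_x_W; rewrite rev_cat_cons -catA => go_home.
apply: reaches_le (reaches_trans count (reaches_trans boundary
                  (reaches_trans clean go_home))) _.
by rewrite /phase_time /W /c' !size_cat /= !size_map size_cat; nia.
Qed.

Lemma setup_run x : reaches (tm_init reduction_tm x)
  (cfg (Scan Ph0 OpBit1) [:: Blank] (phase_tape x (map Bit [:: true; false; false; true; false]) 0))
  ((size x).*2 + 17).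
Proof.
have bits_x_W : all bit_cell (map Bit x ++ phase_word Ph0) by rewrite all_cat all_bit_cell_map.
have seek := seek_end Ph0 (map Bit x) [::] [::] (all_bit_cell_map x).
have write := write_phase_word Ph0 (rev (map Bit x)) Blank (or_introl erefl).
have rewind := rewind_to_scan Ph0 _ [::] bits_x_W (or_introl erefl).
rewrite !cats0 in seek rewind; rewrite rev_cat -catA in rewind.
apply: reaches_le (reaches_trans seek (reaches_trans write rewind)) _.
by rewrite size_cat size_map -addnn /=; lia.
Qed.

Definition neg_square_enc (x : seq bool) : seq bool :=
  x ++ enc_slp (neg_square_suffix (count_instrs OpBit1 x)).

Lemma neg_square_enc_slp P : neg_square_enc (enc_slp P) = enc_slp (neg_square_slp P).
Proof. by rewrite /neg_square_enc enc_slp_cat; have [_ ->] := parse_enc_slp P. Qed.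

Lemma unmark_written m :
  Bit false :: map unmark (map Bit [:: true; false; false; true; false] ++
                           counter m ++ counter m ++ [:: Bit false; Bit true] ++
                           counter m.+1 ++ counter m.+2) =
  map Bit (enc_slp (neg_square_suffix m)).
Proof.
rewrite enc_neg_square_suffix ![in LHS]map_cat !map_unmark_counter.
move: (enc_nat m) (enc_nat m.+1) (enc_nat m.+2) => E0 E1 E2.
by rewrite !map_cat.
Qed.

Lemma reduction_tm_run x :
  reaches (tm_init reduction_tm x) (cfg Halt [:: Blank] (map Bit (neg_square_enc x) ++ [:: End]))
          (1000 * (size x).+1 ^ 2).
Proof.
set m := count_instrs OpBit1 x.
set Pre0 := map Bit [:: true; false; false; true; false].
set Pre1 := (Pre0 ++ counter m) ++ [::].
set Pre2 := (Pre1 ++ counter m) ++ [:: Bit false; Bit true].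
set Pre3 := (Pre2 ++ counter m.+1) ++ [::].
have bits1 : all bit_cell Pre1 by rewrite /Pre1 !all_cat all_bit_cell_marked.
have bits2 : all bit_cell Pre2 by rewrite /Pre2 /Pre1 !all_cat !all_bit_cell_marked.
have bits3 : all bit_cell Pre3 by rewrite /Pre3 /Pre2 /Pre1 !all_cat !all_bit_cell_marked.
have := reaches_trans (setup_run x) (reaches_trans (phase_run Ph0 Ph1 x Pre0 0 erefl isT)
          (reaches_trans (phase_run Ph1 Ph2 x Pre1 0 erefl bits1)
          (reaches_trans (phase_run Ph2 Ph3 x Pre2 1 erefl bits2)
                         (last_phase_run x Pre3 2 bits3)))).
have -> : Pre3 ++ counter (2 + m) = Pre0 ++ counter m ++ counter m ++
                                     [:: Bit false; Bit true] ++ counter m.+1 ++ counter m.+2.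
  by rewrite /Pre3 /Pre2 /Pre1 !cats0 -!catA.
rewrite -cat_cons unmark_written catA -map_cat => /reaches_le; apply.
have size_m k : k <= 2 -> size (counter (k + m)) <= (size x).*2 + 5.
  move=> le_k2; rewrite size_counter -!addnn; have := size_bits (k + m).
  have : m <= size x := count_instrs_le OpBit1 x; lia.
have := size_m 0 isT; have := size_m 1 isT; have := size_m 2 isT.
rewrite /phase_time /Pre3 /Pre2 /Pre1 /Pre0 /m add0n add1n add2n !size_cat size_map -!addnn.
rewrite -[size [:: true; _; _; _; _]]/5 -[size [:: Bit false; Bit true]]/2 -[size [::]]/0.
nia.
Qed.

Lemma tm_output_halted y : tm_output (cfg Halt [:: Blank] (map Bit y ++ [:: End])) = y.
Proof.
have sym_Bit b : @sym_to_bool reduction_tm (Bit b) = Some b.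
  by rewrite /sym_to_bool; case: pickP => [b' /eqP [->] // | /(_ b)]; rewrite /= eqxx.
have sym_End : @sym_to_bool reduction_tm End = None.
  by rewrite /sym_to_bool; case: pickP => // b' /eqP.
rewrite /tm_output /cfg /=; case: y => [|b y] /=; first by rewrite sym_End.
by rewrite sym_Bit; congr (_ :: _); elim: y => [|b' y IH] /=; rewrite ?sym_End ?sym_Bit ?IH.
Qed.

Lemma neg_square_enc_poly_time : poly_time_computable neg_square_enc.
Proof.
exists reduction_tm, 1000 => x; have [t le_t run] := reduction_tm_run x.
have le_bound : t <= 1000 * (size x).+1 ^ 1000.
  by apply: leq_trans le_t _; rewrite leq_mul2l leq_pexp2l.
by rewrite -(subnK le_bound) iterD run iter_halt; split => //; apply: tm_output_halted.
Qed.

Theorem mainTheorem9 : slp_poly_reducible EquSLP ThreeSoSSLP.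
Proof.
exists neg_square_enc; split; first exact: neg_square_enc_poly_time.
move=> P wfP; exists (neg_square_slp P); split; first exact: slp_wf_neg_square.
by split; [exact: neg_square_enc_slp | exact: EquSLP_neg_square].
Qed.
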